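(* Let $\alpha, \beta, \gamma$ be distinct elements of the finite field $\mathbb{F}_q$. If $a_1, a_2, a_3 \in \mathbb{F}_q^*$ satisfy \[ 0 = \alpha(a_2 - a_1) + \beta(a_3 - a_2) + \gamma(a_1 - a_3) \] and \[ 0 = \alpha(a_2^2 - a_1^2) + \beta(a_3^2 - a_2^2) + \gamma(a_1^2 - a_3^2), \] then $a_1 = a_2 = a_3$.
   Context: $\mathbb{F}_q$ is the finite field with $q$ elements and $\mathbb{F}_q^* = \mathbb{F}_q \setminus \{0\}$. *)

From mathcomp Require Import all_boot all_order all_algebra all_field.

(* Subtracting (a2 + a3) times the linear relation from the quadratic one
   leaves (alpha - gamma) (a2 - a1) (a1 - a3) = 0, so a1 = a2 or a1 = a3;
   in either case the linear relation collapses to a nonzero multiple of the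
   remaining difference. *)
From mathcomp Require Import all_boot all_order all_algebra all_field.
From mathcomp Require Import ring.
Import GRing.Theory.
Local Open Scope ring_scope.

Lemma cyclic_quadratic_sub_linear {R : comPzRingType}
    (alpha beta gamma a1 a2 a3 : R) :
  alpha * (a2 ^+ 2 - a1 ^+ 2) + beta * (a3 ^+ 2 - a2 ^+ 2)
    + gamma * (a1 ^+ 2 - a3 ^+ 2)
  - (a2 + a3) * (alpha * (a2 - a1) + beta * (a3 - a2) + gamma * (a1 - a3))
  = (alpha - gamma) * ((a2 - a1) * (a1 - a3)).
Proof. by ring. Qed.

Lemma mulf_subr_eq0 {R : idomainType} {x y u v : R} :
  x != y -> (x - y) * (u - v) = 0 -> u = v.
Proof.
move=> neq_xy /eqP; rewrite mulf_eq0 subr_eq0 (negbTE neq_xy) subr_eq0.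
by move/eqP.
Qed.

Lemma cyclic_relations_const (R : idomainType)
    (alpha beta gamma a1 a2 a3 : R) :
  alpha != beta -> beta != gamma -> alpha != gamma ->
  alpha * (a2 - a1) + beta * (a3 - a2) + gamma * (a1 - a3) = 0 ->
  alpha * (a2 ^+ 2 - a1 ^+ 2) + beta * (a3 ^+ 2 - a2 ^+ 2)
    + gamma * (a1 ^+ 2 - a3 ^+ 2) = 0 ->
  a1 = a2 /\ a2 = a3.
Proof.
move=> neq_ab neq_bg neq_ag lin quad.
have := cyclic_quadratic_sub_linear alpha beta gamma a1 a2 a3.
rewrite lin quad mulr0 subr0 => /esym/eqP.
rewrite mulf_eq0 subr_eq0 (negbTE neq_ag) mulf_eq0 !subr_eq0 /=.
case/orP=> [/eqP a21 | /eqP a13].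
- have a23 : a2 = a3.
    by apply: esym; apply: (mulf_subr_eq0 neq_bg); rewrite -lin a21; ring.
  by rewrite -a21.
- have a12 : a1 = a2.
    by apply: esym; apply: (mulf_subr_eq0 neq_ab); rewrite -lin -a13; ring.
  by rewrite -a12.
Qed.

Theorem lemma3p3 (F : finFieldType) (alpha beta gamma a1 a2 a3 : F) :
  alpha != beta -> beta != gamma -> alpha != gamma ->
  a1 != 0 -> a2 != 0 -> a3 != 0 ->
  alpha * (a2 - a1) + beta * (a3 - a2) + gamma * (a1 - a3) = 0 ->
  alpha * (a2 ^+ 2 - a1 ^+ 2) + beta * (a3 ^+ 2 - a2 ^+ 2)
    + gamma * (a1 ^+ 2 - a3 ^+ 2) = 0 ->
  a1 = a2 /\ a2 = a3.
Proof. by move=> neq_ab neq_bg neq_ag _ _ _; apply: cyclic_relations_const. Qed.
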